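(* Let $G$ be a graph that violates the matching condition, i.e., there is a matching $M$ in $G$ such that the subgraph of $G$ induced by the vertices covered by $M$ has no independent set of size $|M|$. Let $uv$ be any edge of $G$, and let $G'$ be obtained from $G$ by deleting $uv$, adding two new vertices $x_1,x_2$, and adding the edges $ux_1,x_1x_2,x_2v$. Then $G'$ also violates the matching condition, i.e., there is a matching $M'$ in $G'$ such that the subgraph of $G'$ induced by the vertices covered by $M'$ has no independent set of size $|M'|$.
   Context: All graphs are finite and simple. A graph satisfies the matching condition if for every matching $M$ in it, the subgraph induced by the set of vertices covered by $M$ contains an independent set of size $|M|$. *)

From mathcomp Require Import all_boot.
Set Implicit Arguments. Unset Strict Implicit. Unset Printing Implicit Defensive.

Definition simple_graph (T : finType) (e : rel T) : Prop :=
  symmetric e /\ irreflexive e.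

(* Disjointness forces each
   unordered edge to appear at most once, so #|M| is the number of edges. *)
Definition is_matching (T : finType) (e : rel T) (M : {set T * T}) : Prop :=
  (forall p, p \in M -> e p.1 p.2) /\
  (forall p q, p \in M -> q \in M -> p != q ->
     [&& p.1 != q.1, p.1 != q.2, p.2 != q.1 & p.2 != q.2]).

Definition covered (T : finType) (M : {set T * T}) : {set T} :=
  [set x | [exists p in M, (x == p.1) || (x == p.2)]].

Definition indep_in (T : finType) (e : rel T) (W S : {set T}) : Prop :=
  S \subset W /\ (forall x y, x \in S -> y \in S -> ~~ e x y).

Definition matching_condition (T : finType) (e : rel T) : Prop :=
  forall M : {set T * T}, is_matching e M ->
    exists S : {set T}, indep_in e (covered M) S /\ #|S| = #|M|.

(* G' : vertex set T + bool, with x1 = inr false, x2 = inr true.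
   The edge uv is deleted and the path u x1 x2 v is added. *)
Definition subdiv (T : finType) (e : rel T) (u v : T) : rel (T + bool) :=
  fun a b =>
    match a, b with
    | inl x, inl y => e x y && ~~ (((x == u) && (y == v)) || ((x == v) && (y == u)))
    | inl x, inr false => x == u
    | inr false, inl x => x == u
    | inl x, inr true => x == v
    | inr true, inl x => x == v
    | inr b1, inr b2 => b1 != b2
    end.

From mathcomp Require Import all_boot.
Set Implicit Arguments. Unset Strict Implicit. Unset Printing Implicit Defensive.

(* Take a matching M of G whose covered vertices carry no independent set of
   size |M|.  If uv is an edge of M, replace it by ux1 and x2v; otherwise add
   x1x2.  This gives a matching M' of G' with |M'| = |M| + 1 whose covered
   original vertices are covered by M.  An independent set S' of size |M'|
   in G' contains at most one of the adjacent vertices x1, x2, so at least |M|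
   of its vertices are original; and if it contains both u and v, then it
   contains neither x1 nor x2, so dropping u still leaves |M| vertices.  The
   only edge of G missing in G' is uv, so these |M| vertices are independent
   in G, a contradiction. *)

Lemma card_sum_set_le (T U : finType) (A : {set T + U}) :
  #|A| <= #|inl @^-1: A| + #|inr @^-1: A|.
Proof.
have inl_inj : injective (@inl T U) by move=> ? ? [].
have inr_inj : injective (@inr T U) by move=> ? ? [].
rewrite -(card_imset _ inl_inj) -(card_imset _ inr_inj).
apply: leq_trans (leq_card_setU _ _); apply: subset_leq_card.
by apply/subsetP => -[x|y] xA; rewrite inE imset_f ?orbT ?inE.
Qed.

Section IndependentSets.
Variables (T : finType) (e : rel T).

Lemma indep_in_sub (W1 W2 S1 S2 : {set T}) :
  W1 \subset W2 -> S2 \subset S1 -> indep_in e W1 S1 -> indep_in e W2 S2.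
Proof.
move=> sW sS [sSW indS]; split; first by apply: subset_trans sW; apply: subset_trans sSW.
by move=> x y /(subsetP sS) xS /(subsetP sS); apply: indS.
Qed.

Lemma indep_in_card (W S : {set T}) k :
  indep_in e W S -> k <= #|S| -> exists S0, indep_in e W S0 /\ #|S0| = k.
Proof.
move=> indS /card_geqP [s [s_uniq s_size sS]].
exists [set x in s]; split; last by rewrite cardsE (card_uniqP s_uniq).
by apply: indep_in_sub indS => //; apply/subsetP => x; rewrite inE => /sS.
Qed.

End IndependentSets.

Section Covered.
Variable T : finType.
Implicit Types (A B : {set T * T}) (p : T * T).

Lemma coveredP A x :
  reflect (exists2 p, p \in A & x \in [set p.1; p.2]) (x \in covered A).
Proof.
rewrite inE; apply: (iffP existsP) => [[p /andP [pA hx]]|[p pA hx]]; exists p => //.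
  by rewrite !inE.
by rewrite pA -!in_set1 -in_setU.
Qed.

Lemma covered1 A p : p \in A -> p.1 \in covered A.
Proof. by move=> pA; apply/coveredP; exists p; rewrite ?set21. Qed.

Lemma covered2 A p : p \in A -> p.2 \in covered A.
Proof. by move=> pA; apply/coveredP; exists p; rewrite ?set22. Qed.

Lemma covered_set1 p : covered [set p] = [set p.1; p.2].
Proof.
apply/setP => x; apply/coveredP/idP => [[q /set1P -> //]|]; by exists p; rewrite ?set11.
Qed.

Lemma coveredU A B : covered (A :|: B) = covered A :|: covered B.
Proof.
apply/setP => x; rewrite in_setU; apply/coveredP/orP.
  by case=> p /setUP [pA|pB] hx; [left|right]; apply/coveredP; exists p.
by case=> /coveredP [p pA hx]; exists p; rewrite // inE pA ?orbT.
Qed.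

Lemma covered_sub A B : A \subset B -> covered A \subset covered B.
Proof.
move=> /subsetP sAB; apply/subsetP => x /coveredP [p pA xp].
by apply/coveredP; exists p; rewrite ?sAB.
Qed.

Lemma disjoint_covered A B : [disjoint covered A & covered B] -> [disjoint A & B].
Proof.
apply: contraTT => /pred0Pn [p /andP [pA pB]]; apply/pred0Pn; exists p.1.
by rewrite /= !covered1.
Qed.

Lemma card_coveredU A B :
  [disjoint covered A & covered B] -> #|A :|: B| = #|A| + #|B|.
Proof. by move=> /disjoint_covered AB; apply/eqP; rewrite (leq_card_setU A B).2. Qed.

End Covered.

Lemma covered_imset (T U : finType) (f : T -> U) (A : {set T * T}) :
  covered [set (f p.1, f p.2) | p in A] = f @: covered A.
Proof.
apply/setP => y; apply/coveredP/imsetP.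
  case=> _ /imsetP [p pA ->] /set2P [] ->.
    by exists p.1; rewrite ?covered1.
  by exists p.2; rewrite ?covered2.
case=> x /coveredP [p pA /set2P [] -> ->]; exists (f p.1, f p.2);
  by rewrite ?imset_f ?set21 ?set22.
Qed.

Lemma card_imset_pairs (T U : finType) (f : T -> U) (A : {set T * T}) :
  injective f -> #|[set (f p.1, f p.2) | p in A]| = #|A|.
Proof.
by move=> f_inj; apply: card_imset => -[? ?] [? ?] /= [/f_inj -> /f_inj ->].
Qed.

Section Matchings.
Variables (T : finType) (e : rel T).
Implicit Types (A B M : {set T * T}) (p : T * T).

Lemma is_matching_set1 p : e p.1 p.2 -> is_matching e [set p].
Proof. by move=> ep; split=> [q /set1P -> // | q r /set1P -> /set1P ->]; rewrite eqxx. Qed.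

Lemma is_matchingU A B :
  is_matching e A -> is_matching e B -> [disjoint covered A & covered B] ->
  is_matching e (A :|: B).
Proof.
move=> [eA mA] [eB mB] AB; split=> [p /setUP [/eA | /eB] // | p q].
have neq x y : x \in covered A -> y \in covered B -> x != y.
  by move=> xA yB; apply: contraTneq AB => xy; apply/pred0Pn; exists x; rewrite /= xA xy.
have neqC x y : x \in covered B -> y \in covered A -> x != y.
  by move=> xB yA; rewrite eq_sym neq.
move=> /setUP [pA|pB] /setUP [qA|qB]; try by [apply: mA | apply: mB].
  by move=> _; rewrite !neq ?covered1 ?covered2.
by move=> _; rewrite !neqC ?covered1 ?covered2.
Qed.

Lemma is_matching_sub A M : A \subset M -> is_matching e M -> is_matching e A.
Proof.
move=> /subsetP sAM [eM mM].
by split=> [p /sAM | p q /sAM pM /sAM]; [apply: eM | apply: mM].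
Qed.

Lemma matching_covered_disjoint M A B :
  is_matching e M -> A \subset M -> B \subset M -> [disjoint A & B] ->
  [disjoint covered A & covered B].
Proof.
move=> [_ mM] /subsetP sAM /subsetP sBM AB; apply/pred0P => x /=.
apply/negP => /andP [/coveredP [p pA xp] /coveredP [q qB xq]].
have pq : p != q by apply: contraTneq AB => pq; apply/pred0Pn; exists p; rewrite /= pA pq.
move: (mM p q (sAM p pA) (sBM q qB) pq).
by case/set2P: xp xq => -> /set2P [] ->; rewrite eqxx ?andbF.
Qed.

Lemma is_matching_imset (U : finType) (e' : rel U) (f : T -> U) M :
  injective f -> is_matching e M -> {in M, forall p, e' (f p.1) (f p.2)} ->
  is_matching e' [set (f p.1, f p.2) | p in M].
Proof.
move=> f_inj [_ mM] eM; split=> [_ /imsetP [p pM ->] | x y]; first exact: eM.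
move=> /imsetP [p pM ->] /imsetP [q qM ->] fpq.
have pq : p != q by apply: contraNneq fpq => ->.
by case/and4P: (mM p q pM qM pq); rewrite /= !(inj_eq f_inj) => -> -> -> ->.
Qed.

End Matchings.

Section Subdivision.
Variables (T : finType) (e : rel T) (u v : T).
Implicit Types (M N : {set T * T}).

Local Notation e' := (subdiv e u v).
Local Notation lift N := [set (@inl T bool p.1, @inl T bool p.2) | p in N].

Let inl_inj : injective (@inl T bool). Proof. by move=> ? ? []. Qed.

Lemma is_matching_lift N :
  is_matching e N -> (u, v) \notin N -> (v, u) \notin N -> is_matching e' (lift N).
Proof.
move=> mN uvN vuN; apply: (is_matching_imset inl_inj mN) => p pN.
rewrite /= mN.1 //=; apply/negP => /orP [] /andP [/eqP p1 /eqP p2].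
  by move: uvN; rewrite -p1 -p2 -surjective_pairing pN.
by move: vuN; rewrite -p1 -p2 -surjective_pairing pN.
Qed.

Lemma is_matching_path :
  u != v -> is_matching e' [set (inl u, inr false); (inr true, inl v)].
Proof.
move=> uv; apply: is_matchingU; try by apply: is_matching_set1; rewrite /= eqxx.
rewrite !covered_set1 /=; apply/pred0P => -[x|[]]; rewrite !inE //=.
by rewrite !(inj_eq inl_inj) orbF; case: eqP => // ->; rewrite (negbTE uv).
Qed.

Definition extends_matching M (M' : {set (T + bool) * (T + bool)}) :=
  [/\ is_matching e' M', #|M'| = #|M|.+1 & inl @^-1: covered M' \subset covered M].

Lemma preimset_inl_covered_lift N : inl @^-1: covered (lift N) = covered N.
Proof. by apply/setP => x; rewrite inE covered_imset (mem_imset _ _ inl_inj). Qed.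

Lemma extend_matching_on_edge M p0 :
  u != v -> is_matching e M -> p0 \in M ->
  u \in [set p0.1; p0.2] -> v \in [set p0.1; p0.2] ->
  extends_matching M (lift (M :\ p0) :|: [set (inl u, inr false); (inr true, inl v)]).
Proof.
move=> uv mM p0M up0 vp0; set N := M :\ p0.
have mN : is_matching e N := is_matching_sub (subD1set M p0) mM.
have N_p0 : [disjoint covered N & covered [set p0]].
  apply: matching_covered_disjoint mM (subD1set M p0) _ _; first by rewrite sub1set.
  by rewrite disjoint_sym disjoints1 !inE eqxx.
have uN : u \notin covered N.
  by rewrite (disjointFl N_p0) // covered_set1.
have vN : v \notin covered N.
  by rewrite (disjointFl N_p0) // covered_set1.
have lift_path :
    [disjoint covered (lift N) & covered [set (inl u, inr false); (inr true, inl v)]].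
  rewrite covered_imset coveredU !covered_set1 /=; apply/pred0P => x /=.
  apply/negP => /andP [/imsetP [y yN ->]]; rewrite !inE !(inj_eq inl_inj) orbF.
  by case/orP=> /eqP yE; [move: uN | move: vN]; rewrite -yE yN.
split.
- apply: is_matchingU lift_path; last exact: is_matching_path.
  by apply: is_matching_lift mN _ _; apply: contra uN; [move/covered1 | move/covered2].
- by rewrite card_coveredU // card_imset_pairs // cards2 (cardsD1 p0 M) p0M addnC.
have p0M_cov : [set p0.1; p0.2] \subset covered M.
  by rewrite -covered_set1 covered_sub // sub1set.
rewrite coveredU preimsetU preimset_inl_covered_lift; apply/subUsetP; split.
  by apply: covered_sub; apply: subD1set.
have -> : inl @^-1: covered [set (inl u, inr false); (inr true, @inl T bool v)]
          = [set u; v].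
  by apply/setP => x; rewrite coveredU !covered_set1 !inE /= !(inj_eq inl_inj) orbF.
by apply: subset_trans p0M_cov; rewrite subUset !sub1set up0 vp0.
Qed.

Lemma extend_matching_off_edge M :
  is_matching e M -> (u, v) \notin M -> (v, u) \notin M ->
  extends_matching M (lift M :|: [set (inr false, inr true)]).
Proof.
move=> mM uvM vuM.
have lift_x12 : [disjoint covered (lift M) & covered [set (inr false, inr true)]].
  rewrite covered_imset covered_set1; apply/pred0P => x /=.
  by apply/negP => /andP [/imsetP [y _ ->]]; rewrite !inE.
split.
- apply: is_matchingU lift_x12; first exact: is_matching_lift.
  exact: is_matching_set1.
- by rewrite card_coveredU // card_imset_pairs // cards1 addn1.
rewrite coveredU preimsetU preimset_inl_covered_lift covered_set1.
by apply/subUsetP; split => //; apply/subsetP => x; rewrite !inE.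
Qed.

Lemma extend_matching M :
  simple_graph e -> e u v -> is_matching e M ->
  exists M' : {set (T + bool) * (T + bool)}, extends_matching M M'.
Proof.
move=> [_ e_irr] euv mM; have uv : u != v by apply: contraTneq euv => ->; rewrite e_irr.
have [uvM | uvM] := boolP ((u, v) \in M).
  by eexists; apply: extend_matching_on_edge uvM _ _; rewrite ?set21 ?set22.
have [vuM | vuM] := boolP ((v, u) \in M).
  by eexists; apply: extend_matching_on_edge vuM _ _; rewrite ?set21 ?set22.
by eexists; apply: extend_matching_off_edge.
Qed.

Section IndependentTransfer.
Variables (W' S' : {set T + bool}).
Hypothesis indS' : indep_in e' W' S'.

Lemma indep_in_unsubdiv (S : {set T}) :
  S \subset inl @^-1: S' -> ~~ ((u \in S) && (v \in S)) -> indep_in e (inl @^-1: W') S.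
Proof.
case: indS' => sSW' indep' /subsetP sSS' not_uv; split.
  by apply/subsetP => x /sSS'; rewrite !inE => /(subsetP sSW').
have inS' z : z \in S -> inl z \in S' by move/sSS'; rewrite inE.
move=> x y xS yS; move: (indep' _ _ (inS' x xS) (inS' y yS)) => /=.
rewrite negb_and negbK.
case/orP => // /orP [] /andP [/eqP xu /eqP yv]; move: not_uv; rewrite -xu -yv xS yS //.
Qed.

Lemma card_inr_subdiv : #|inr @^-1: S'| <= 1.
Proof.
case: indS' => _ indep'; apply/card_le1_eqP => -[] [] //; rewrite !inE => b1S b2S;
  by move: (indep' _ _ b1S b2S).
Qed.

Lemma indep_in_subdiv :
  exists S, indep_in e (inl @^-1: W') S /\ #|S'| <= #|S|.+1.
Proof.
case: (indS') => _ indep'.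
have [/andP [uS vS] | not_uv] := boolP ((u \in inl @^-1: S') && (v \in inl @^-1: S')).
  exists (inl @^-1: S' :\ u); split.
    by apply: indep_in_unsubdiv; rewrite ?subD1set // !inE eqxx.
  have no_inr : inr @^-1: S' = set0.
    have uS' : inl u \in S' by rewrite inE in uS.
    have vS' : inl v \in S' by rewrite inE in vS.
    apply/setP => -[] /[!inE]; apply/negP => x_in.
      by move: (indep' _ _ x_in vS') => /=; rewrite eqxx.
    by move: (indep' _ _ x_in uS') => /=; rewrite eqxx.
  by move: (card_sum_set_le S'); rewrite no_inr cards0 addn0 (cardsD1 u) uS.
exists (inl @^-1: S'); split; first exact: indep_in_unsubdiv.
by rewrite -addn1 (leq_trans (card_sum_set_le S')) // leq_add2l card_inr_subdiv.
Qed.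

End IndependentTransfer.

End Subdivision.

Theorem mainTheorem3 (T : finType) (e : rel T) (u v : T) :
  simple_graph e ->
  ~ matching_condition e ->
  e u v ->
  ~ matching_condition (subdiv e u v).
Proof.
move=> simple_e not_mc euv mc'; apply: not_mc => M mM.
have [M' [mM' card_M' cov_M']] := extend_matching simple_e euv mM.
have [S' [indS' card_S']] := mc' M' mM'.
have [S [indS card_S]] := indep_in_subdiv indS'.
apply: indep_in_card (indep_in_sub cov_M' (subxx S) indS) _.
by rewrite -ltnS -card_M' -card_S'.
Qed.
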